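(* Assume $\alpha=\beta\ge1$ and $d_1=d_2$. Let $\mathbf U$ be the similarity profile and $\mathbf u$ a solution of the scaled system with $\mathcal E_{\mathrm B}(\mathbf u(0)|\mathbf U)<\infty$. Then $$\mathcal E_{\mathrm B}(\mathbf u(\tau)|\mathbf U)\le e^{-\tau/2}\,\mathcal E_{\mathrm B}(\mathbf u(0)|\mathbf U)\quad\text{for all }\tau>0.$$
   Context: Fix $d_1,d_2,k>0$, real stoichiometric coefficients $\alpha,\beta\ge1$ and $A_-,A_+>0$. The similarity profile is a triple $(U,V,\Lambda)$ with $U,V\in\mathrm C^2(\mathbb R)$ positive, bounded and bounded away from $0$, $\Lambda:\mathbb R\to\mathbb R$, satisfying $d_1U''+\tfrac y2U'+\alpha\Lambda=0$, $d_2V''+\tfrac y2V'-\beta\Lambda=0$, $U^\alpha=V^\beta$ on $\mathbb R$, and $U(\pm\infty)=A_\pm^\beta$, $V(\pm\infty)=A_\pm^\alpha$. The scaled system is $u_\tau=d_1u_{yy}+\tfrac y2u_y+e^\tau\alpha k(v^\beta-u^\alpha)$, $v_\tau=d_2v_{yy}+\tfrac y2v_y-e^\tau\beta k(v^\beta-u^\alpha)$ for $\tau>0$, $y\in\mathbb R$, with $(u,v)(\tau,\pm\infty)=(A_\pm^\beta,A_\pm^\alpha)$. A ''solution'' is a positive classical solution for which the relative entropy is finite and differentiable in $\tau$ with differentiation under the integral allowed, all integrals appearing are finite, and integrations by parts over $\mathbb R$ produce no boundary terms ($\rho,\zeta\to1$ at $\pm\infty$ with sufficient decay). Relative densities $\rho=u/U$,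 $\zeta=v/V$. $\lambda_{\mathrm B}(z)=z\log z-z+1$. Relative Boltzmann entropy: $\mathcal E_{\mathrm B}(\mathbf u|\mathbf U)=\int_{\mathbb R}\big(\lambda_{\mathrm B}(\rho)U+\lambda_{\mathrm B}(\zeta)V\big)\mathrm dy$. *)

From Stdlib Require Import Reals.
From Coquelicot Require Import Coquelicot.
Open Scope R_scope.

Definition intR (f : R -> R) : R :=
  RInt_gen f (Rbar_locally m_infty) (Rbar_locally p_infty).
Definition integrableR (f : R -> R) : Prop :=
  ex_RInt_gen f (Rbar_locally m_infty) (Rbar_locally p_infty).

Definition lim_pm (f : R -> R) (l : R) : Prop :=
  is_lim f m_infty l /\ is_lim f p_infty l.

Definition d_tau (w : R -> R -> R) (t y : R) : R := Derive (fun s => w s y) t.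
Definition d_y (w : R -> R -> R) (t y : R) : R := Derive (fun z => w t z) y.
Definition d_yy (w : R -> R -> R) (t y : R) : R := Derive (fun z => d_y w t z) y.

Definition lamB (z : R) : R := z * ln z - z + 1.

Definition entIntegrand (u v : R -> R -> R) (U V : R -> R) (t y : R) : R :=
  lamB (u t y / U y) * U y + lamB (v t y / V y) * V y.
Definition relEntB (u v : R -> R -> R) (U V : R -> R) (t : R) : R :=
  intR (entIntegrand u v U V t).

Definition C2 (f : R -> R) : Prop :=
  (forall y, ex_derive f y) /\ (forall y, ex_derive (Derive f) y) /\
  (forall y, continuous (Derive (Derive f)) y).

Definition pos_bdd (f : R -> R) : Prop :=
  exists m M : R, 0 < m /\ forall y, m <= f y <= M.

Definition similarity_profile (d1 d2 alpha beta Am Ap : R)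
    (U V Lam : R -> R) : Prop :=
  C2 U /\ C2 V /\ pos_bdd U /\ pos_bdd V /\
  (forall y, d1 * Derive (Derive U) y + y / 2 * Derive U y + alpha * Lam y = 0) /\
  (forall y, d2 * Derive (Derive V) y + y / 2 * Derive V y - beta * Lam y = 0) /\
  (forall y, Rpower (U y) alpha = Rpower (V y) beta) /\
  is_lim U m_infty (Rpower Am beta) /\ is_lim U p_infty (Rpower Ap beta) /\
  is_lim V m_infty (Rpower Am alpha) /\ is_lim V p_infty (Rpower Ap alpha).

(* Technical conditions on one component w (= u or v) of a solution, with
   reference profile W, diffusion d and reaction term  c * e^t * (v^beta-u^alpha)
   (c = alpha k for u, c = - beta k for v), at a fixed time t > 0.
   Here rho = w/W is the relative density.  These are the finiteness of the
   integrals appearing in the entropy computation and the vanishing of the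
   boundary terms of the integrations by parts performed over R. *)
Definition component_ok (d c alpha beta : R) (u v w : R -> R -> R)
    (W : R -> R) (t : R) : Prop :=
  let rho := fun y => w t y / W y in
  let rho' := fun y => Derive rho y in
  lim_pm rho 1 /\
  lim_pm (fun y => ln (rho y) * d_y w t y) 0 /\
  lim_pm (fun y => y * w t y * ln (rho y)) 0 /\
  lim_pm (fun y => (rho y - 1) * Derive W y) 0 /\
  lim_pm (fun y => y * W y * (rho y - 1)) 0 /\
  integrableR (fun y => lamB (rho y) * W y) /\
  integrableR (fun y => ln (rho y) * d_tau w t y) /\
  integrableR (fun y => ln (rho y) * d_yy w t y) /\
  integrableR (fun y => ln (rho y) * (y * d_y w t y)) /\
  integrableR (fun y => ln (rho y) *
      (exp t * c * (Rpower (v t y) beta - Rpower (u t y) alpha))) /\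
  integrableR (fun y => rho' y / rho y * d_y w t y) /\
  integrableR (fun y => rho' y / rho y * (y * w t y)) /\
  integrableR (fun y => w t y * ln (rho y)) /\
  integrableR (fun y => W y * (rho' y) ^ 2 / rho y) /\
  integrableR (fun y => rho' y * Derive W y) /\
  integrableR (fun y => y * W y * rho' y) /\
  integrableR (fun y => (rho y - 1) * W y) /\
  integrableR (fun y => (rho y - 1) * Derive (Derive W) y) /\
  integrableR (fun y => (rho y - 1) * (y * Derive W y)).

Definition classical (w : R -> R -> R) : Prop :=
  (forall t y, 0 <= t -> 0 < w t y) /\
  (forall t y, 0 <= t -> continuous (fun z => w t z) y) /\
  (forall t y, 0 < t ->
     ex_derive (fun s => w s y) t /\
     ex_derive (fun z => w t z) y /\
     ex_derive (fun z => d_y w t z) y /\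
     continuous (fun p : R * R => w (fst p) (snd p)) (t, y) /\
     continuous (fun p : R * R => d_tau w (fst p) (snd p)) (t, y) /\
     continuous (fun p : R * R => d_y w (fst p) (snd p)) (t, y) /\
     continuous (fun p : R * R => d_yy w (fst p) (snd p)) (t, y)).

Definition scaled_solution (d1 d2 k alpha beta Am Ap : R)
    (U V : R -> R) (u v : R -> R -> R) : Prop :=
  classical u /\ classical v /\
  (forall t y, 0 < t ->
     d_tau u t y = d1 * d_yy u t y + y / 2 * d_y u t y
                   + exp t * alpha * k * (Rpower (v t y) beta - Rpower (u t y) alpha)) /\
  (forall t y, 0 < t ->
     d_tau v t y = d2 * d_yy v t y + y / 2 * d_y v t y
                   - exp t * beta * k * (Rpower (v t y) beta - Rpower (u t y) alpha)) /\
  (forall t, 0 < t ->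
     is_lim (fun y => u t y) m_infty (Rpower Am beta) /\
     is_lim (fun y => u t y) p_infty (Rpower Ap beta) /\
     is_lim (fun y => v t y) m_infty (Rpower Am alpha) /\
     is_lim (fun y => v t y) p_infty (Rpower Ap alpha)) /\
  (forall t, 0 < t -> integrableR (entIntegrand u v U V t)) /\
  (forall t, 0 < t ->
     is_derive (relEntB u v U V) t
       (intR (fun y => ln (u t y / U y) * d_tau u t y
                       + ln (v t y / V y) * d_tau v t y))) /\
  filterlim (relEntB u v U V) (at_right 0) (locally (relEntB u v U V 0)) /\
  (forall t, 0 < t ->
     component_ok d1 (alpha * k) alpha beta u v u U t /\
     component_ok d2 (- (beta * k)) alpha beta u v v V t).

(* When alpha = beta the constraint U^alpha = V^alpha forces U = V, and adding
   the two profile equations with d1 = d2 shows that U solves the stationary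
   equation  d U'' + y U'/2 = 0  (the Lagrange multiplier Lambda drops out).
   For each component w (= u or v) with relative density rho = w/U, the time
   derivative of its entropy density satisfies the pointwise balance
     ln rho * w_t = G' - d * U rho'^2/rho - lambda_B(rho) U / 2 + ln rho * reaction,
   where the flux  G = ln rho (d w' + y w/2) - (rho-1)(d U' + y U/2)  vanishes at
   +-infinity, so G' integrates to zero and the Fisher term has a sign.  The two
   reaction terms add up to  c (v^alpha - u^alpha)(ln u - ln v) <= 0.  Hence
   E'(t) <= -E(t)/2, and a Gronwall argument on exp(t/2) E(t) concludes. *)

From Stdlib Require Import Reals Lra FunctionalExtensionality.
From Coquelicot Require Import Coquelicot.
Open Scope R_scope.

Lemma intR_correct f : integrableR f ->
  is_RInt_gen f (Rbar_locally m_infty) (Rbar_locally p_infty) (intR f).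
Proof. intro Hf; exact (RInt_gen_correct f Hf). Qed.

Lemma intR_unique f l :
  is_RInt_gen f (Rbar_locally m_infty) (Rbar_locally p_infty) l -> intR f = l.
Proof. intro H; exact (is_RInt_gen_unique f l H). Qed.

Lemma integrable_plus f g : integrableR f -> integrableR g ->
  integrableR (fun y => f y + g y).
Proof.
  intros Hf Hg; eexists.
  apply (is_RInt_gen_plus f g); apply intR_correct; assumption.
Qed.

Lemma intR_plus f g : integrableR f -> integrableR g ->
  intR (fun y => f y + g y) = intR f + intR g.
Proof.
  intros Hf Hg; apply intR_unique.
  apply (is_RInt_gen_plus f g); apply intR_correct; assumption.
Qed.

Lemma integrable_scal c f : integrableR f -> integrableR (fun y => c * f y).
Proof.
  intro Hf; eexists.
  apply (is_RInt_gen_scal f c); apply intR_correct; assumption.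
Qed.

Lemma intR_scal c f : integrableR f -> intR (fun y => c * f y) = c * intR f.
Proof.
  intro Hf; apply intR_unique.
  apply (is_RInt_gen_scal f c); apply intR_correct; assumption.
Qed.

Lemma intR_ext f g : (forall y, f y = g y) -> integrableR f -> intR f = intR g.
Proof. intros H Hf; apply RInt_gen_ext_eq; assumption. Qed.

(* Positivity: the integral of a nonnegative integrable function is nonnegative;
   obtained from the norm estimate |int f| <= int f. *)
Lemma intR_ge0 f : integrableR f -> (forall y, 0 <= f y) -> 0 <= intR f.
Proof.
  intros Hf Hpos.
  assert (Habs : Rabs (intR f) <= intR f).
  { apply (RInt_gen_norm (Fa := Rbar_locally m_infty) (Fb := Rbar_locally p_infty) f f);
      try (apply intR_correct; exact Hf).
    - apply (Filter_prod _ _ _ (fun a => a < 0) (fun b => 0 < b)); simpl.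
      + exists 0; intros; lra.
      + exists 0; intros; lra.
      + intros; lra.
    - apply filter_forall; intros ab x _.
      change (Rabs (f x) <= f x); rewrite Rabs_pos_eq; [lra | apply Hpos]. }
  pose proof (Rabs_pos (intR f)); lra.
Qed.

(* This is how all
   integrations by parts are performed without boundary terms. *)
Lemma is_RInt_gen_derivative_vanishing G g : (forall y, is_derive G y (g y)) ->
  (forall y, continuous g y) -> lim_pm G 0 ->
  is_RInt_gen g (Rbar_locally m_infty) (Rbar_locally p_infty) 0.
Proof.
  intros Hd Hc [Hm Hp].
  assert (HD : forall y, Derive G y = g y) by (intro y; apply is_derive_unique, Hd).
  replace 0 with (0 - 0) by ring.
  apply (is_RInt_gen_ext (Derive G)).
  - apply filter_forall; intros ab x _; apply HD.
  - apply is_RInt_gen_Derive; try assumption.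
    + apply filter_forall; intros ab x _; eexists; apply Hd.
    + apply filter_forall; intros ab x _.
      apply (continuous_ext g); [intro; symmetry; apply HD | apply Hc].
Qed.

Lemma lim_pm_plus f g : lim_pm f 0 -> lim_pm g 0 -> lim_pm (fun y => f y + g y) 0.
Proof.
  intros [Hfm Hfp] [Hgm Hgp].
  replace 0 with (0 + 0) by ring; split; apply is_lim_plus'; assumption.
Qed.

Lemma lim_pm_scal c f : lim_pm f 0 -> lim_pm (fun y => c * f y) 0.
Proof.
  intros [Hm Hp]; split;
    replace (Finite 0) with (Rbar_mult c 0) by (simpl; f_equal; ring);
    apply is_lim_scal_l; assumption.
Qed.

Lemma lim_pm_ext f g : (forall y, f y = g y) -> lim_pm f 0 -> lim_pm g 0.
Proof. intros H [Hm Hp]; split; apply (is_lim_ext f); assumption. Qed.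

(* For a density f with derivatives f1, f2 and a reference profile W with
   derivative W1, write rho = f/W.  The entropy flux is
     G = ln rho (d f' + y f/2) - (rho - 1)(d W' + y W/2),
   the Fisher density is  W rho'^2/rho, and the entropy production is G'. *)
Definition entropy_flux (d : R) (f f1 W W1 : R -> R) (y : R) : R :=
  ln (f y / W y) * (d * f1 y + y * f y / 2)
  - (f y / W y - 1) * (d * W1 y + y * W y / 2).

Definition fisher_density (f f1 W W1 : R -> R) (y : R) : R :=
  W y * ((f1 y * W y - f y * W1 y) / W y ^ 2) ^ 2 / (f y / W y).

Definition entropy_production (d : R) (f f1 f2 W W1 : R -> R) (y : R) : R :=
  ln (f y / W y) * (d * f2 y + y / 2 * f1 y)
  + (d * fisher_density f f1 W W1 y + / 2 * (lamB (f y / W y) * W y)).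

Section EntropyFlux.

Variables (d : R) (f f1 f2 W W1 W2 : R -> R).
Hypotheses (Hf : forall y, is_derive f y (f1 y)) (Hf1 : forall y, is_derive f1 y (f2 y))
  (Hf2 : forall y, continuous f2 y)
  (HW : forall y, is_derive W y (W1 y)) (HW1 : forall y, is_derive W1 y (W2 y))
  (fpos : forall y, 0 < f y) (Wpos : forall y, 0 < W y)
  (stationary : forall y, d * W2 y + y / 2 * W1 y = 0).

Lemma entropy_flux_derive y :
  is_derive (entropy_flux d f f1 W W1) y (entropy_production d f f1 f2 W W1 y).
Proof.
  pose proof (fpos y); pose proof (Wpos y).
  assert (0 < f y / W y) by (apply Rdiv_lt_0_compat; assumption).
  unfold entropy_flux, entropy_production, fisher_density, lamB.
  auto_derive.
  - repeat split; try (eexists; eauto); lra.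
  - change (fun x : R => f x) with f; change (fun x : R => f1 x) with f1;
    change (fun x : R => W x) with W; change (fun x : R => W1 x) with W1.
    rewrite (is_derive_unique _ _ _ (Hf y)), (is_derive_unique _ _ _ (Hf1 y)),
      (is_derive_unique _ _ _ (HW y)), (is_derive_unique _ _ _ (HW1 y)).
    apply Rminus_diag_uniq; unfold Rdiv.
    transitivity (- (f y * / W y - 1) * (d * W2 y + y * / 2 * W1 y)).
    + field; lra.
    + rewrite stationary; ring.
Qed.

Lemma entropy_production_continuous y :
  continuous (entropy_production d f f1 f2 W W1) y.
Proof.
  pose proof (fpos y); pose proof (Wpos y).
  assert (0 < f y / W y) by (apply Rdiv_lt_0_compat; assumption).
  unfold entropy_production.
  apply (continuous_plus (fun y => ln (f y / W y) * (d * f2 y + y / 2 * f1 y))).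
  - apply (continuous_mult (fun y => ln (f y / W y)) (fun y => d * f2 y + y / 2 * f1 y)).
    + apply (@ex_derive_continuous R_AbsRing R_NormedModule).
      auto_derive; repeat split; try (eexists; eauto); lra.
    + apply (continuous_plus (fun y => d * f2 y)).
      * apply (continuous_scal_r d f2); apply Hf2.
      * apply (@ex_derive_continuous R_AbsRing R_NormedModule); auto_derive; eexists; eauto.
  - apply (@ex_derive_continuous R_AbsRing R_NormedModule); unfold fisher_density, lamB.
    auto_derive; repeat split; try (eexists; eauto); try lra; nra.
Qed.

End EntropyFlux.

Lemma entropy_flux_vanishes d (f f1 W W1 : R -> R) :
  lim_pm (fun y => ln (f y / W y) * f1 y) 0 ->
  lim_pm (fun y => y * f y * ln (f y / W y)) 0 ->
  lim_pm (fun y => (f y / W y - 1) * W1 y) 0 ->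
  lim_pm (fun y => y * W y * (f y / W y - 1)) 0 ->
  lim_pm (entropy_flux d f f1 W W1) 0.
Proof.
  intros L1 L2 L3 L4.
  apply (lim_pm_ext (fun y => (d * (ln (f y / W y) * f1 y) + / 2 * (y * f y * ln (f y / W y)))
                        + (- d * ((f y / W y - 1) * W1 y) + - / 2 * (y * W y * (f y / W y - 1))))).
  - intro y; unfold entropy_flux, Rdiv; ring.
  - repeat apply lim_pm_plus; apply lim_pm_scal; assumption.
Qed.

Lemma component_production_vanishes (d c alpha beta : R) (u v w : R -> R -> R)
    (W : R -> R) (t : R) :
  0 < t -> classical w -> C2 W -> (forall y, 0 < W y) ->
  (forall y, d * Derive (Derive W) y + y / 2 * Derive W y = 0) ->
  component_ok d c alpha beta u v w W t ->
  is_RInt_gen (entropy_production d (w t) (d_y w t) (d_yy w t) W (Derive W))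
    (Rbar_locally m_infty) (Rbar_locally p_infty) 0.
Proof.
  intros tp [wpos [_ wreg]] [HW1 [HW2 _]] Wpos stationary Hok.
  destruct Hok as [_ [L1 [L2 [L3 [L4 _]]]]].
  assert (Hw : forall y, is_derive (w t) y (d_y w t y))
    by (intro y; apply Derive_correct, (wreg t y tp)).
  assert (Hw1 : forall y, is_derive (d_y w t) y (d_yy w t y))
    by (intro y; apply Derive_correct, (wreg t y tp)).
  assert (Hw2 : forall y, continuous (d_yy w t) y).
  { intro y; destruct (wreg t y tp) as [_ [_ [_ [_ [_ [_ Hc]]]]]].
    apply (continuous_comp_2 (fun _ => t) (fun z => z) (d_yy w));
      [apply continuous_const | apply continuous_id | exact Hc]. }
  assert (HW : forall y, is_derive W y (Derive W y)) by (intro y; apply Derive_correct, HW1).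
  assert (HW' : forall y, is_derive (Derive W) y (Derive (Derive W) y))
    by (intro y; apply Derive_correct, HW2).
  assert (wtpos : forall y, 0 < w t y) by (intro y; apply wpos; lra).
  apply (is_RInt_gen_derivative_vanishing (entropy_flux d (w t) (d_y w t) W (Derive W))).
  - intro y; apply entropy_flux_derive with (W2 := Derive (Derive W)); assumption.
  - intro y; apply (entropy_production_continuous d _ _ _ _ _ (Derive (Derive W)));
      assumption.
  - apply entropy_flux_vanishes; assumption.
Qed.

Lemma component_entropy_inequality (d c alpha beta : R) (u v w : R -> R -> R)
    (W : R -> R) (t : R) :
  0 < t -> 0 < d -> classical w -> C2 W -> (forall y, 0 < W y) ->
  (forall y, d * Derive (Derive W) y + y / 2 * Derive W y = 0) ->
  (forall y, d_tau w t y = d * d_yy w t y + y / 2 * d_y w t y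
       + exp t * c * (Rpower (v t y) beta - Rpower (u t y) alpha)) ->
  component_ok d c alpha beta u v w W t ->
  intR (fun y => ln (w t y / W y) * d_tau w t y) <=
    - / 2 * intR (fun y => lamB (w t y / W y) * W y)
    + intR (fun y => ln (w t y / W y) *
         (exp t * c * (Rpower (v t y) beta - Rpower (u t y) alpha))).
Proof.
  intros tp dp clw C2W Wpos stationary Hpde Hok.
  pose proof (component_production_vanishes d c alpha beta u v w W t
    tp clw C2W Wpos stationary Hok) as Hprod.
  destruct clw as [wpos [_ wreg]]; destruct C2W as [HW1 _].
  unfold component_ok in Hok; cbv zeta in Hok.
  destruct Hok as [_ [_ [_ [_ [_ [Ilam [Itau [_ [_ [Ireac [_ [_ [_ [Ifisher
     _]]]]]]]]]]]]]].
  set (Prod := entropy_production d (w t) (d_y w t) (d_yy w t) W (Derive W)) in *.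
  set (Fisher := fun y => W y * Derive (fun z => w t z / W z) y ^ 2 / (w t y / W y)) in *.
  set (Ent := fun y => lamB (w t y / W y) * W y) in *.
  set (Reac := fun y => ln (w t y / W y) *
         (exp t * c * (Rpower (v t y) beta - Rpower (u t y) alpha))) in *.
  assert (Hbalance : forall y, ln (w t y / W y) * d_tau w t y =
            Prod y + (- d * Fisher y + (- / 2 * Ent y + Reac y))).
  { intro y; unfold Prod, Fisher, Ent, Reac, entropy_production, fisher_density.
    replace (Derive (fun z => w t z / W z) y)
      with ((d_y w t y * W y - w t y * Derive W y) / W y ^ 2).
    - rewrite Hpde; ring.
    - symmetry; apply is_derive_unique, is_derive_div.
      + apply Derive_correct, (wreg t y tp).
      + apply Derive_correct, HW1.
      + apply Rgt_not_eq, Wpos. }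
  assert (Hfisher : 0 <= intR Fisher).
  { apply intR_ge0; [exact Ifisher | intro y; unfold Fisher].
    assert (0 < w t y) by (apply wpos; lra); pose proof (Wpos y).
    apply Rmult_le_pos; [apply Rmult_le_pos; [lra | apply pow2_ge_0] |].
    apply Rlt_le, Rinv_0_lt_compat, Rdiv_lt_0_compat; assumption. }
  assert (IProd : integrableR Prod) by (eexists; exact Hprod).
  assert (IF : integrableR (fun y => - d * Fisher y)) by (apply integrable_scal; assumption).
  assert (IE : integrableR (fun y => - / 2 * Ent y)) by (apply integrable_scal; assumption).
  assert (IER : integrableR (fun y => - / 2 * Ent y + Reac y))
    by (apply integrable_plus; assumption).
  rewrite (intR_ext _ _ Hbalance Itau), (intR_plus _ _ IProd (integrable_plus _ _ IF IER)),
    (intR_plus _ _ IF IER), (intR_plus _ _ IE Ireac), (intR_scal _ _ Ifisher),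
    (intR_scal _ _ Ilam), (intR_unique _ _ Hprod).
  nra.
Qed.

(* Sign of the reaction terms: with the same exponent a, the reaction
   c (q^a - p^a) tested against ln p - ln q is nonpositive, by monotonicity. *)
Lemma reaction_entropy_nonpos a c p q W : 0 < a -> 0 <= c -> 0 < p -> 0 < q -> 0 < W ->
  ln (p / W) * (c * (Rpower q a - Rpower p a))
  + ln (q / W) * (- c * (Rpower q a - Rpower p a)) <= 0.
Proof.
  intros ha hc hp hq hW.
  rewrite !ln_div by assumption.
  assert (Hmono : (Rpower q a - Rpower p a) * (ln p - ln q) <= 0).
  { unfold Rpower; destruct (Rtotal_order (ln p) (ln q)) as [Hlt | [Heq | Hgt]].
    - assert (exp (a * ln p) < exp (a * ln q)) by (apply exp_increasing; nra); nra.
    - rewrite Heq; lra.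
    - assert (exp (a * ln q) < exp (a * ln p)) by (apply exp_increasing; nra); nra. }
  nra.
Qed.

Lemma nonincreasing_of_derive_nonpos (F dF : R -> R) s tau :
  (forall x, 0 < x -> is_derive F x (dF x)) -> (forall x, 0 < x -> dF x <= 0) ->
  0 < s <= tau -> F tau <= F s.
Proof.
  intros Hd Hneg [hs hst].
  destruct (MVT_gen F s tau dF) as [x [hx Hmvt]].
  - intros x hx; apply Hd; rewrite Rmin_left in hx by lra; lra.
  - intros x hx; rewrite Rmin_left in hx by lra.
    apply continuity_pt_filterlim, (@ex_derive_continuous R_AbsRing R_NormedModule).
    eexists; apply Hd; lra.
  - rewrite Rmin_left, Rmax_right in hx by lra.
    assert (dF x <= 0) by (apply Hneg; lra). nra.
Qed.

Lemma le_right_limit (F : R -> R) l tau : 0 < tau ->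
  filterlim F (at_right 0) (locally l) -> (forall s, 0 < s < tau -> F tau <= F s) ->
  F tau <= l.
Proof.
  intros htau Hlim Hle.
  apply (filterlim_le (F := at_right 0) (fun _ => F tau) F (F tau) l).
  - exists (mkposreal _ htau); intros s hs hpos; apply Hle; split; [exact hpos|].
    change (Rabs (s - 0) < tau) in hs; apply Rabs_lt_between in hs; lra.
  - apply filterlim_const.
  - exact Hlim.
Qed.

(* Gronwall step: E' <= -E/2 on (0, +oo) and right continuity at 0 give
   E(tau) <= exp(-tau/2) E(0); apply the two previous lemmas to exp(s/2) E(s). *)
Lemma gronwall_half (E dE : R -> R) :
  (forall t, 0 < t -> is_derive E t (dE t)) ->
  (forall t, 0 < t -> dE t <= - E t / 2) ->
  filterlim E (at_right 0) (locally (E 0)) ->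
  forall tau, 0 < tau -> E tau <= exp (- tau / 2) * E 0.
Proof.
  intros Hd Hle Hlim tau htau.
  pose (F := fun s => exp (s / 2) * E s).
  assert (HdF : forall s, 0 < s -> is_derive F s (exp (s / 2) * (E s / 2 + dE s))).
  { intros s hs; unfold F; auto_derive.
    - eexists; apply Hd, hs.
    - change (fun x : R => E x) with E; rewrite (is_derive_unique _ _ _ (Hd s hs)).
      unfold Rdiv; ring. }
  assert (HlimF : filterlim F (at_right 0) (locally (exp (0 / 2) * E 0))).
  { apply (filterlim_comp_2 (G := locally (exp (0 / 2))) (H := locally (E 0))
      (fun s => exp (s / 2)) E Rmult); [| exact Hlim |].
    - apply (filterlim_filter_le_1 (F := locally 0)); [apply filter_le_within |].
      apply (@ex_derive_continuous R_AbsRing R_NormedModule (fun s => exp (s / 2)) 0).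
      auto_derive; trivial.
    - apply (filterlim_mult (K := R_AbsRing)). }
  replace (exp (0 / 2) * E 0) with (E 0) in HlimF
    by (replace (0 / 2) with 0 by field; rewrite exp_0; ring).
  assert (HF : F tau <= E 0).
  { apply (le_right_limit F _ tau htau HlimF); intros s hs.
    apply (nonincreasing_of_derive_nonpos F (fun s => exp (s / 2) * (E s / 2 + dE s)));
      [exact HdF | | lra].
    intros x hx; pose proof (exp_pos (x / 2)); pose proof (Hle x hx); nra. }
  unfold F in HF.
  assert (Hexp : exp (- tau / 2) * exp (tau / 2) = 1).
  { rewrite <- exp_plus; replace (- tau / 2 + tau / 2) with 0 by field; apply exp_0. }
  pose proof (exp_pos (- tau / 2)).
  replace (E tau) with (exp (- tau / 2) * (exp (tau / 2) * E tau))
    by (rewrite <- Rmult_assoc, Hexp; ring).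
  apply Rmult_le_compat_l; lra.
Qed.

Lemma pos_bdd_pos f : pos_bdd f -> forall y, 0 < f y.
Proof. intros [m [M [hm Hf]]] y; specialize (Hf y); lra. Qed.

(* With equal exponents and diffusions the two profiles coincide, and the
   multiplier cancels when the two profile equations are added. *)
Lemma symmetric_profile d alpha Am Ap (U V Lam : R -> R) : 0 < alpha ->
  similarity_profile d d alpha alpha Am Ap U V Lam ->
  U = V /\ forall y, d * Derive (Derive U) y + y / 2 * Derive U y = 0.
Proof.
  intros ha [_ [_ [HU [HV [eqU [eqV [eqUV _]]]]]]].
  assert (UV : U = V).
  { apply functional_extensionality; intro y.
    apply ln_inv; [apply pos_bdd_pos, HU | apply pos_bdd_pos, HV |].
    specialize (eqUV y); unfold Rpower in eqUV; apply exp_inv in eqUV.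
    apply (Rmult_eq_reg_l alpha); lra. }
  subst V; split; [reflexivity |].
  intro y; specialize (eqU y); specialize (eqV y); lra.
Qed.

(* Entropy dissipation inequality E'(t) <= -E(t)/2 in the symmetric case:
   add the two component inequalities; the reaction contributions cancel in sign. *)
Lemma entropy_dissipation d k alpha (u v : R -> R -> R) (U : R -> R) t :
  0 < t -> 0 < d -> 0 < k -> 0 < alpha ->
  classical u -> classical v -> C2 U -> (forall y, 0 < U y) ->
  (forall y, d * Derive (Derive U) y + y / 2 * Derive U y = 0) ->
  (forall y, d_tau u t y = d * d_yy u t y + y / 2 * d_y u t y
                   + exp t * alpha * k * (Rpower (v t y) alpha - Rpower (u t y) alpha)) ->
  (forall y, d_tau v t y = d * d_yy v t y + y / 2 * d_y v t y
                   - exp t * alpha * k * (Rpower (v t y) alpha - Rpower (u t y) alpha)) ->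
  component_ok d (alpha * k) alpha alpha u v u U t ->
  component_ok d (- (alpha * k)) alpha alpha u v v U t ->
  intR (fun y => ln (u t y / U y) * d_tau u t y + ln (v t y / U y) * d_tau v t y)
    <= - relEntB u v U U t / 2.
Proof.
  intros tp dp kp ap clu clv C2U Upos stationary pdeu pdev oku okv.
  assert (Du := component_entropy_inequality d (alpha * k) alpha alpha u v u U t
    tp dp clu C2U Upos stationary ltac:(intro y; rewrite pdeu; ring) oku).
  assert (Dv := component_entropy_inequality d (- (alpha * k)) alpha alpha u v v U t
    tp dp clv C2U Upos stationary ltac:(intro y; rewrite pdev; ring) okv).
  destruct oku as [_ [_ [_ [_ [_ [Ientu [Itu [_ [_ [Ireu _]]]]]]]]]].
  destruct okv as [_ [_ [_ [_ [_ [Ientv [Itv [_ [_ [Irev _]]]]]]]]]].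
  set (Ru := fun y => ln (u t y / U y) *
          (exp t * (alpha * k) * (Rpower (v t y) alpha - Rpower (u t y) alpha))) in *.
  set (Rv := fun y => ln (v t y / U y) *
          (exp t * - (alpha * k) * (Rpower (v t y) alpha - Rpower (u t y) alpha))) in *.
    assert (Hreac : intR Ru + intR Rv <= 0).
  { assert (Hpos : 0 <= intR (fun y => -1 * (Ru y + Rv y))).
    { apply intR_ge0; [apply integrable_scal, integrable_plus; assumption |].
      intro y; unfold Ru, Rv.
      assert (hu : 0 < u t y) by (apply (proj1 clu); lra).
      assert (hv : 0 < v t y) by (apply (proj1 clv); lra).
      assert (Hc : 0 <= exp t * (alpha * k))
        by (apply Rlt_le, Rmult_lt_0_compat;
            [apply exp_pos | apply Rmult_lt_0_compat; assumption]).
      pose proof (reaction_entropy_nonpos alpha _ _ _ _ ap Hc hu hv (Upos y)) as Hy.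
      replace (exp t * - (alpha * k)) with (- (exp t * (alpha * k))) by ring; lra. }
    rewrite (intR_scal _ _ (integrable_plus _ _ Ireu Irev)), (intR_plus _ _ Ireu Irev)
      in Hpos.
    lra. }
  unfold relEntB, entIntegrand.
  rewrite (intR_plus _ _ Itu Itv), (intR_plus _ _ Ientu Ientv).
  lra.
Qed.

Theorem mainTheorem7 (d1 d2 k alpha beta Am Ap : R)
  (U V Lam : R -> R) (u v : R -> R -> R)
  (hd1 : 0 < d1) (hd2 : 0 < d2) (hk : 0 < k)
  (halpha : 1 <= alpha) (hbeta : 1 <= beta)
  (hAm : 0 < Am) (hAp : 0 < Ap)
  (hab : alpha = beta) (hdd : d1 = d2)
  (hprof : similarity_profile d1 d2 alpha beta Am Ap U V Lam)
  (hsol : scaled_solution d1 d2 k alpha beta Am Ap U V u v)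
  (h0 : integrableR (entIntegrand u v U V 0)) :
  forall tau, 0 < tau ->
    relEntB u v U V tau <= exp (- tau / 2) * relEntB u v U V 0.
Proof.
  subst beta d2.
  destruct (symmetric_profile d1 alpha Am Ap U V Lam ltac:(lra) hprof) as [<- stationary].
  destruct hprof as [C2U [_ [HU _]]].
  destruct hsol as [clu [clv [pdeu [pdev [_ [_ [hder [hcont hok]]]]]]]].
  apply (gronwall_half _ _ hder); [| exact hcont].
  intros t tp; destruct (hok t tp) as [oku okv].
  apply (entropy_dissipation d1 k alpha u v U t tp hd1 hk ltac:(lra) clu clv C2U
    (pos_bdd_pos U HU) stationary (fun y => pdeu t y tp) (fun y => pdev t y tp) oku okv).
Qed.
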